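(* Let $\mathrm{N}_1 = \mathrm{nM}([2,4,5,6,8,8])$. Then $\mathrm{N}_1(k) = \mathrm{N}(k)$ for all $k \in \mathbb{N} \setminus \{2^m - m + 1 : m \in \mathbb{N}, m \ge 3\}$, while for $k = 2^m - m + 1$ with $m \in \mathbb{N}$, $m \ge 3$, we have $\mathrm{N}_1(k) = \mathrm{N}(k) - 1 = 2^m$.
   Context: $\mathrm{N} : \mathbb{N} \to \mathbb{N}$ is defined by $\mathrm{N}(1) = 2$ and $\mathrm{N}(k) = \max_{i \in \{2,\dots,k\}} \min(2i, \mathrm{N}(k-i+1)+i)$ for $k \ge 2$. $[2,4,5,6,8,8]$ denotes the function $f : \mathbb{N} \to \mathbb{N} \cup \{+\infty\}$ with $(f(1),\dots,f(6)) = (2,4,5,6,8,8)$ and $f(k) = +\infty$ for $k \ge 7$. For $g : \mathbb{N} \to \mathbb{N} \cup \{+\infty\}$ and $k \ge 2$, $m \ge 4$, $\mathrm{pdp}_g(k,m)$ is the set of pairs $(e_0,e_1) \in \mathbb{N}^2$ with (i) $e_0,e_1 \ge 2$; (ii) $e_0,e_1 \le k$; (iii) $e_0+e_1 = m$; (iv) $e_0 \le e_1$; (v) $g(k-e_\varepsilon+1)+e_\varepsilon \ge m$ for both $\varepsilon \in \{0,1\}$. For $f$ with $f(1) = 2$, $f' = \mathrm{nM}(f)$ is defined by $f'(1) = 2$ and, for $k > 1$, $f'(k) = \min(m, f(k))$ where $m$ is the largest integer in $\{4,\dots,2k\}$ with $\mathrm{pdp}_{f'}(k,m) \ne \emptyset$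 (this uses only $f'(k')$ for $k' < k$). *)

From mathcomp Require Import all_boot.
Set Implicit Arguments. Unset Strict Implicit. Unset Printing Implicit Defensive.

(* Values in N ∪ {+oo} are represented by [option nat]; [None] is +oo.
   Natural numbers N = {1,2,...}: arguments 0 are irrelevant (junk). *)

(* N(1) = 2, N(k) = max_{2<=i<=k} min(2i, N(k-i+1)+i) for k >= 2.
   Defined by recursion with fuel; [N k := Nfuel k k] (fuel k suffices since
   recursive calls are at k-i+1 <= k-1). *)
Fixpoint Nfuel (fuel k : nat) : nat :=
  match fuel with
  | 0 => 2
  | fu.+1 =>
      if k <= 1 then 2
      else \max_(2 <= i < k.+1) minn (2 * i) (Nfuel fu (k - i + 1) + i)
  end.

Definition N (k : nat) : nat := Nfuel k k.

Definition f0 (k : nat) : option nat :=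
  if (1 <= k <= 6) then Some (nth 0 [:: 2; 4; 5; 6; 8; 8] k.-1) else None.

Definition ext_add_ge (x : option nat) (e m : nat) : bool :=
  if x is Some a then m <= a + e else true.

Definition in_pdp (g : nat -> option nat) (k m e0 e1 : nat) : bool :=
  [&& 2 <= e0, 2 <= e1, e0 <= k, e1 <= k, e0 + e1 == m, e0 <= e1,
      ext_add_ge (g (k - e0 + 1)) e0 m & ext_add_ge (g (k - e1 + 1)) e1 m].

(* pdp_g(k,m) != emptyset  (any element has e0,e1 <= k) *)
Definition pdp_nonempty (g : nat -> option nat) (k m : nat) : bool :=
  [exists e0 : 'I_k.+1, exists e1 : 'I_k.+1, in_pdp g k m e0 e1].

Definition ext_min (m : nat) (x : option nat) : nat :=
  if x is Some a then minn m a else m.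

Fixpoint nMfuel (f : nat -> option nat) (fuel k : nat) : nat :=
  match fuel with
  | 0 => 2
  | fu.+1 =>
      if k <= 1 then 2
      else ext_min
             (\max_(4 <= m < (2 * k).+1 | pdp_nonempty (fun j => Some (nMfuel f fu j)) k m) m)
             (f k)
  end.

Definition nM (f : nat -> option nat) (k : nat) : nat := nMfuel f k k.

From mathcomp Require Import all_boot zify.

Set Implicit Arguments.
Unset Strict Implicit.
Unset Printing Implicit Defensive.

(* N has the closed form N(k) = k + lvl k, where lvl k is the largest m with
   2^m - m <= k: past the midpoint i = (k + lvl k)/2 the level of k - i + 1
   drops, so min(2i, N(k-i+1) + i) never exceeds k + lvl k, and the midpoint
   attains it.  The same bound caps every v with pdp(k, v) nonempty, and
   N_1 is N - 1 exactly at the exceptional k = 2^m - m + 1: there the split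
   (2^(m-1), 2^(m-1)) only reaches 2^m, while the candidate 2^m + 1 can only
   split as (2^(m-1), 2^(m-1) + 1), whose first part lands on the smaller
   exceptional point 2^(m-1) - (m-1) + 1 of value 2^(m-1).  Elsewhere the
   split (2^(lvl k - 1), N(k) - 2^(lvl k - 1)) witnesses N(k). *)

Lemma exp2_addn_mono a b : a <= b -> 2 ^ a + b <= 2 ^ b + a.
Proof.
elim: b => [|b IH]; first by rewrite leqn0 => /eqP ->.
rewrite leq_eqVlt => /orP[/eqP -> //|]; rewrite ltnS => /IH.
have := expn_gt0 2 b; rewrite expnS; lia.
Qed.

Lemma double_le_exp2 m : m.*2 <= 2 ^ m.
Proof. elim: m => // m IH; have := expn_gt0 2 m; rewrite expnS doubleS; lia. Qed.

Definition lvl k := \max_(m < k.+1 | 2 ^ m <= k + m) m.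

Lemma leq_lvl k m : 0 < k -> (m <= lvl k) = (2 ^ m <= k + m).
Proof.
move=> k_gt0; apply/idP/idP => [|hm].
- have [i hi ->] : {i0 : 'I_k.+1 | 2 ^ i0 <= k + i0 & lvl k = i0}.
    by apply: eq_bigmax_cond; apply/card_gt0P; exists ord0; rewrite unfold_in /= expn0 addn0.
  by move/exp2_addn_mono; move: hi; lia.
- have m_lt : m < k.+1 by have := double_le_exp2 m; lia.
  exact: (@leq_bigmax_cond _ _ _ (Ordinal m_lt)).
Qed.

Lemma lvl_lt k m : 0 < k -> (lvl k < m) = (k + m < 2 ^ m).
Proof. by move=> k_gt0; rewrite ltnNge leq_lvl // -ltnNge. Qed.

Lemma lvl_eq k m : 0 < k -> 2 ^ m <= k + m -> k + m.+1 < 2 ^ m.+1 -> lvl k = m.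
Proof. by move=> k_gt0 lo hi; apply/eqP; rewrite eqn_leq leq_lvl // -ltnS lvl_lt // hi lo. Qed.

Lemma lvl_spec k : 0 < k -> 2 ^ lvl k <= k + lvl k /\ k + (lvl k).+1 < 2 ^ (lvl k).+1.
Proof. by move=> k_gt0; rewrite -leq_lvl // -lvl_lt. Qed.

Lemma lvl_gt0 k : 0 < k -> 0 < lvl k.
Proof. by move=> k_gt0; rewrite leq_lvl // expn1 addn1. Qed.

Definition Nform k := k + lvl k.

Lemma lvl_drop k e : e <= k -> Nform k < 2 * e -> lvl (k - e + 1) < lvl k.
Proof.
rewrite /Nform => e_le_k gt; have k_gt0 : 0 < k by lia.
have [_] := lvl_spec k_gt0; rewrite expnS => hi.
rewrite lvl_lt; lia.
Qed.

Lemma min_pair_le_Nform k e : e <= k -> minn (2 * e) (Nform (k - e + 1) + e) <= Nform k.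
Proof.
move=> e_le_k; case: (leqP (2 * e) (Nform k)) => [le|gt]; first by rewrite geq_min le.
have := lvl_drop e_le_k gt; rewrite geq_min /Nform; lia.
Qed.

Lemma Nform_le_min_mid k (i := (Nform k).+1 %/ 2) : 1 < k ->
  Nform k <= minn (2 * i) (Nform (k - i + 1) + i).
Proof.
rewrite /i /Nform => k_gt1; have k_gt0 : 0 < k by lia.
have [lo _] := lvl_spec k_gt0; have := lvl_gt0 k_gt0.
case: (lvl k) lo => // n; rewrite expnS => lo _.
have : n <= lvl (k - (k + n.+1).+1 %/ 2 + 1) by rewrite leq_lvl; lia.
rewrite leq_min; lia.
Qed.

Lemma Nform_rec k : 1 < k -> \max_(2 <= i < k.+1) minn (2 * i) (Nform (k - i + 1) + i) = Nform k.
Proof.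
move=> k_gt1; apply/eqP; rewrite eqn_leq; apply/andP; split.
- apply/bigmax_leqP_seq => i; rewrite mem_index_iota => /andP[_ i_le_k] _.
  exact: min_pair_le_Nform.
- apply: (bigmaxn_sup_seq ((Nform k).+1 %/ 2)) => //; last exact: Nform_le_min_mid.
  have [lo _] := lvl_spec (ltnW k_gt1); rewrite mem_index_iota /Nform.
  have := double_le_exp2 (lvl k); have := lvl_gt0 (ltnW k_gt1); lia.
Qed.

Lemma Nfuel_Nform fu k : 0 < k <= fu -> Nfuel fu k = Nform k.
Proof.
elim: fu k => [|fu IH] k; first lia.
case/andP=> k_gt0 k_le /=; case: leqP => [k_le1|k_gt1].
  have -> : k = 1 by lia.
  by rewrite /Nform (@lvl_eq 1 1).
rewrite -(Nform_rec k_gt1); apply: eq_big_nat => i /andP[i2 ik].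
rewrite IH //; lia.
Qed.

Lemma N_Nform k : 0 < k -> N k = Nform k.
Proof. by move=> k_gt0; rewrite /N Nfuel_Nform // k_gt0 leqnn. Qed.

Definition exceptional k := (3 <= lvl k) && (Nform k == (2 ^ lvl k).+1).

Definition N1form k := Nform k - exceptional k.

Lemma lvl_exceptional m : 1 < m -> lvl (2 ^ m - m + 1) = m.
Proof.
case: m => // m m_gt0; have lt := ltn_expl m (ltnSn 1).
by apply: lvl_eq; rewrite !expnS; lia.
Qed.

Lemma Nform_exceptional m : 1 < m -> Nform (2 ^ m - m + 1) = (2 ^ m).+1.
Proof. by move=> m_gt1; rewrite /Nform lvl_exceptional //; have := ltn_expl m (ltnSn 1); lia. Qed.

Lemma N1form_exceptional m : 2 < m -> N1form (2 ^ m - m + 1) = 2 ^ m.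
Proof.
move=> m_gt2; have m_gt1 : 1 < m by lia.
by rewrite /N1form /exceptional Nform_exceptional // lvl_exceptional // m_gt2 eqxx subn1.
Qed.

Lemma exceptionalP k : 0 < k ->
  reflect (exists m, 3 <= m /\ k = 2 ^ m - m + 1) (exceptional k).
Proof.
move=> k_gt0; apply: (iffP andP) => [[m_ge3 /eqP Nform_k]|[m [m_ge3 ->]]].
  exists (lvl k); split => //.
  by have := ltn_expl (lvl k) (ltnSn 1); move: Nform_k; rewrite /Nform; lia.
by rewrite lvl_exceptional ?Nform_exceptional //; lia.
Qed.

Lemma N1form_nonexceptional k : ~~ exceptional k -> N1form k = Nform k.
Proof. by rewrite /N1form => /negbTE ->; rewrite subn0. Qed.

Lemma pdp_nonemptyP g k m :
  reflect (exists e0 e1, in_pdp g k m e0 e1) (pdp_nonempty g k m).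
Proof.
apply: (iffP existsP) => [[e0 /existsP[e1 h]]|[e0 [e1 h]]]; first by exists e0, e1.
have /and4P[_ _ e0_le /andP[e1_le _]] := h.
by exists (Ordinal (e0_le : e0 < k.+1)); apply/existsP; exists (Ordinal (e1_le : e1 < k.+1)).
Qed.

Lemma eq_in_pdp g g' k m e0 e1 : (forall j, 0 < j < k -> g j = g' j) ->
  in_pdp g k m e0 e1 = in_pdp g' k m e0 e1.
Proof.
move=> gg'; rewrite /in_pdp; case: (leqP 2 e0) => //= e0_ge2; case: (leqP 2 e1) => //= e1_ge2.
case: (leqP e0 k) => //= e0_le; case: (leqP e1 k) => //= e1_le.
by rewrite !gg' //; lia.
Qed.

Lemma eq_pdp_nonempty g g' k m : (forall j, 0 < j < k -> g j = g' j) ->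
  pdp_nonempty g k m = pdp_nonempty g' k m.
Proof. by move=> gg'; apply: eq_existsb => e0; apply: eq_existsb => e1; apply: eq_in_pdp. Qed.

Lemma pdpN1_le_Nform k v e0 e1 : in_pdp (Some \o N1form) k v e0 e1 -> v <= Nform k.
Proof.
case/and4P=> _ _ _ /and5P[e1_le /eqP <- e0_le_e1 _ /=]; rewrite /N1form => h1.
apply: leq_trans (min_pair_le_Nform e1_le); rewrite leq_min; lia.
Qed.

Lemma pdpN1_Nform k : 1 < k -> ~~ exceptional k ->
  in_pdp (Some \o N1form) k (Nform k) (2 ^ (lvl k).-1) (Nform k - 2 ^ (lvl k).-1).
Proof.
move=> k_gt1 nexc; have k_gt0 : 0 < k by lia.
have [lo hi] := lvl_spec k_gt0.
have lvl_ge2 : 2 <= lvl k by rewrite leq_lvl //; lia.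
rewrite /Nform; case lvl_k : (lvl k) lo hi lvl_ge2 => [|n] // lo hi n_gt0 /=.
have n_lt := ltn_expl n (ltnSn 1); rewrite !expnS in lo hi.
have j1_eq : k - (k + n.+1 - 2 ^ n) + 1 = 2 ^ n - n by lia.
have lvl_j1 : lvl (2 ^ n - n) = n by apply: lvl_eq; rewrite ?expnS; lia.
have N1form_j1 : N1form (2 ^ n - n) = 2 ^ n.
  have nexc1 : ~~ exceptional (2 ^ n - n) by rewrite /exceptional /Nform lvl_j1; lia.
  by rewrite N1form_nonexceptional // /Nform lvl_j1; lia.
have N1form_j0 : k + n.+1 <= N1form (k - 2 ^ n + 1) + 2 ^ n.
  have : n <= lvl (k - 2 ^ n + 1) by rewrite leq_lvl; lia.
  rewrite leq_eqVlt => /orP[/eqP lvl_j0|]; last by rewrite /N1form /Nform; lia.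
  have nexc0 : ~~ exceptional (k - 2 ^ n + 1).
    apply: contra nexc; rewrite /exceptional /Nform -lvl_j0 => /andP[n_ge3 /eqP E].
    by rewrite /exceptional /Nform lvl_k; apply/andP; split; [lia | apply/eqP; rewrite expnS; lia].
  by rewrite N1form_nonexceptional // /Nform -lvl_j0; lia.
by rewrite /in_pdp /= j1_eq N1form_j1; lia.
Qed.

Lemma pdpN1_exceptional m : 2 < m ->
  in_pdp (Some \o N1form) (2 ^ m - m + 1) (2 ^ m) (2 ^ m.-1) (2 ^ m.-1).
Proof.
case: m => // n n_gt1; have n_lt := ltn_expl n (ltnSn 1).
rewrite /in_pdp /= !expnS; have -> : 2 * 2 ^ n - n.+1 + 1 - 2 ^ n + 1 = 2 ^ n - n + 1 by lia.
by have := Nform_exceptional n_gt1; rewrite /N1form; lia.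
Qed.

Lemma pdpN1_exceptional_le m v e0 e1 : 3 < m ->
  in_pdp (Some \o N1form) (2 ^ m - m + 1) v e0 e1 -> v <= 2 ^ m.
Proof.
move=> m_gt3 pdp; have := pdpN1_le_Nform pdp; rewrite Nform_exceptional; last by lia.
rewrite leq_eqVlt ltnS => /orP[/eqP v_eq|//].
case: m m_gt3 pdp v_eq => // n n_gt2; have n_lt := ltn_expl n (ltnSn 1).
set k := 2 ^ n.+1 - n.+1 + 1 => pdp v_eq.
move: (pdp) => /and4P[_ _ _ /and5P[e1_le /eqP e_sum e0_le_e1 /= h0 h1]].
have e1_gt : Nform k < 2 * e1 by rewrite /k Nform_exceptional //; move: v_eq; rewrite expnS; lia.
have := lvl_drop e1_le e1_gt; rewrite /k lvl_exceptional; last by lia.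
rewrite ltnS => lvl_j1_le.
have lvl_j1 : lvl (k - e1 + 1) = n.
  by move: h1; rewrite /k /N1form /Nform; have := ltn_expl n.+1 (ltnSn 1); lia.
have [lo _] := @lvl_spec (k - e1 + 1) ltac:(lia); rewrite lvl_j1 in lo.
have e0_eq : e0 = 2 ^ n by move: e_sum lo e1_le; rewrite v_eq /k expnS; lia.
move: h0; rewrite e0_eq (_ : k - 2 ^ n + 1 = 2 ^ n - n + 1) ?N1form_exceptional //.
  rewrite expnS; lia.
rewrite /k expnS; lia.
Qed.

Lemma pdpN1_N1form k : 1 < k -> pdp_nonempty (Some \o N1form) k (N1form k).
Proof.
move=> k_gt1; apply/pdp_nonemptyP.
case: (boolP (exceptional k)) => [/(exceptionalP (ltnW k_gt1))[m [m_ge3 ->]] | nexc].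
  by rewrite N1form_exceptional //; do 2 eexists; exact: pdpN1_exceptional.
by rewrite N1form_nonexceptional //; do 2 eexists; exact: pdpN1_Nform.
Qed.

Lemma pdpN1_le_N1form k v : 6 < k -> pdp_nonempty (Some \o N1form) k v -> v <= N1form k.
Proof.
move=> k_gt6 /pdp_nonemptyP[e0 [e1 pdp]]; have k_gt0 : 0 < k by lia.
case: (boolP (exceptional k)) => [/(exceptionalP k_gt0)[m [m_ge3 k_eq]] | nexc].
  have m_gt3 : 3 < m by case: m m_ge3 k_eq k_gt6 => [|[|[|[|m]]]] // _ ->.
  by move: pdp; rewrite k_eq N1form_exceptional //; apply: pdpN1_exceptional_le.
by rewrite N1form_nonexceptional //; apply: pdpN1_le_Nform pdp.
Qed.

Lemma N1form_range k : 1 < k -> 4 <= N1form k <= 2 * k.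
Proof.
move=> k_gt1; have [lo _] := lvl_spec (ltnW k_gt1).
have := double_le_exp2 (lvl k); have : 2 <= lvl k by rewrite leq_lvl //; lia.
by rewrite /N1form /exceptional /Nform; case: (3 <= lvl k); lia.
Qed.

Lemma f0_N1form k : 0 < k <= 6 -> f0 k = Some (N1form k).
Proof.
move=> k_range; have lvl_k : lvl k = nth 0 [:: 0; 1; 2; 2; 2; 3; 3] k.
  by apply: lvl_eq; move: k_range; case: k => [|[|[|[|[|[|[|]]]]]]].
rewrite /f0 k_range /N1form /exceptional /Nform lvl_k; move: k_range.
by case: k {lvl_k} => [|[|[|[|[|[|[|]]]]]]].
Qed.

(* The seed [f0] agrees with [N1form] on 1..6 and is needed only at k = 6,
   the exceptional point with m = 3, where pdp alone would allow 9. *)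
Lemma N1form_rec k : 1 < k ->
  ext_min (\max_(4 <= v < (2 * k).+1 | pdp_nonempty (Some \o N1form) k v) v) (f0 k) = N1form k.
Proof.
move=> k_gt1; set M := \max_(_ <= _ < _ | _) _.
have N1form_le_M : N1form k <= M.
  by apply: bigmaxn_sup_seq (pdpN1_N1form k_gt1) _ => //; rewrite mem_index_iota ltnS N1form_range.
case: (leqP k 6) => [k_le6 | k_gt6].
  by rewrite f0_N1form ?(ltnW k_gt1) //=; apply/minn_idPr.
rewrite /f0 (_ : 0 < k <= 6 = false) /=; last lia.
apply/eqP; rewrite eqn_leq N1form_le_M andbT; apply/bigmax_leqP_seq => v _.
exact: pdpN1_le_N1form.
Qed.

Lemma nMfuel_N1form fu k : 0 < k <= fu -> nMfuel f0 fu k = N1form k.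
Proof.
elim: fu k => [|fu IH] k; first lia.
case/andP=> k_gt0 k_le /=; case: leqP => [k_le1|k_gt1].
  have -> : k = 1 by lia.
  by rewrite /N1form /exceptional /Nform (@lvl_eq 1 1).
rewrite -(N1form_rec k_gt1); congr ext_min; apply: eq_bigl => v.
by apply: eq_pdp_nonempty => j /andP[j_gt0 j_lt]; rewrite /= IH //; lia.
Qed.

Lemma nM_N1form k : 0 < k -> nM f0 k = N1form k.
Proof. by move=> k_gt0; rewrite /nM nMfuel_N1form // k_gt0 leqnn. Qed.

Theorem theorem14p7 :
  (forall k : nat, 1 <= k ->
     ~ (exists m : nat, 3 <= m /\ k = 2 ^ m - m + 1) ->
     nM f0 k = N k) /\
  (forall m : nat, 3 <= m ->
     nM f0 (2 ^ m - m + 1) = N (2 ^ m - m + 1) - 1 /\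
     nM f0 (2 ^ m - m + 1) = 2 ^ m).
Proof.
split=> [k k_gt0 not_exc | m m_ge3].
  by rewrite nM_N1form // N_Nform // N1form_nonexceptional //; apply/(exceptionalP k_gt0).
have k_gt0 : 0 < 2 ^ m - m + 1 by rewrite addn1.
by rewrite nM_N1form // N_Nform // N1form_exceptional // Nform_exceptional ?subn1 //; lia.
Qed.
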